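(* Let $A,B\in\mathbb{R}^{m\times n}$ with $m<n$ and $\operatorname{rank}(A)=m$. Let $A_1\in\mathbb{R}^{m\times m}$ be a nonsingular submatrix of $A$ formed by some $m$ columns of $A$, and let $B_1\in\mathbb{R}^{m\times m}$ be the submatrix of $B$ formed by the same column indices. If $\|A_1^{-1}B_1\|_p<1$ for some $1\le p\le\infty$, then for any given $b\in\mathbb{R}^m$ the generalized absolute value equation $Ax-B|x|=b$ has infinitely many solutions $x\in\mathbb{R}^n$.
   Context: $|x|$ denotes the entrywise absolute value. $\|\cdot\|_p$ on matrices denotes the operator norm induced by the vector $p$-norm. *)

From HB Require Import structures.
From mathcomp Require Import all_boot all_order all_algebra.
From mathcomp Require Import all_classical all_reals all_analysis.
Set Implicit Arguments. Unset Strict Implicit. Unset Printing Implicit Defensive.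
Import Order.TTheory GRing.Theory Num.Theory.
Local Open Scope ring_scope.
Local Open Scope classical_set_scope.

Definition vnorm (R : realType) (k : nat) (p : \bar R) (x : 'cV[R]_k) : R :=
  match p with
  | r%:E => (\sum_(i < k) `|x i 0| `^ r) `^ r^-1
  | _ => \big[Num.max/0]_(i < k) `|x i 0|
  end.

Definition opnorm (R : realType) (k l : nat) (p : \bar R) (M : 'M[R]_(k, l)) : R :=
  sup [set vnorm p (M *m x) / vnorm p x | x in [set x : 'cV[R]_l | x != 0]].

Definition mabs (R : realType) (k l : nat) (M : 'M[R]_(k, l)) : 'M[R]_(k, l) :=
  map_mx (fun a : R => `|a|) M.

From HB Require Import structures.
From mathcomp Require Import all_boot all_order all_algebra.
From mathcomp Require Import all_classical all_reals all_analysis.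
Set Implicit Arguments. Unset Strict Implicit. Unset Printing Implicit Defensive.
Import Order.TTheory GRing.Theory Num.Theory.
Local Open Scope ring_scope.
Local Open Scope classical_set_scope.

(* Choose a column j0 outside the range of f (there is one since m < n) and
   look for solutions x with x_(f i) = y_i, x_j0 = t and zeros elsewhere.  For
   such x, A x - B|x| = b becomes the square equation A1 y - B1 |y| = c_t with
   c_t = b - t a_j0 + |t| b_j0 (a_j0, b_j0 the j0-th columns of A and B), i.e.
   y = A1^-1 B1 |y| + A1^-1 c_t.  Since | |u| - |v| | <= |u - v| entrywise and
   the p-norm is monotone, the right hand side is a contraction for the
   p-norm, so it has a fixed point.  Each t thus yields a solution whose j0-th
   entry is t. *)

(* MathComp-Analysis puts the complete and the normed-module structures on
   matrices separately; this joins them. *)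
HB.instance Definition _ (R : realType) (k l : nat) := Complete.on 'M[R]_(k, l).

Lemma powRK (R : realType) (r a : R) : r != 0 -> 0 <= a -> (a `^ r) `^ r^-1 = a.
Proof. by move=> r0 a0; rewrite -powRrM mulfV // powRr1. Qed.

Lemma ler_coord_mx_norm (R : realDomainType) (m n : nat) (x : 'M[R]_(m, n))
    i j :
  `|x i j| <= `|x|.
Proof.
rewrite -[`|x|]/(mx_norm x) mx_normrE.
exact: (le_bigmax _ (fun ij => `|x ij.1 ij.2|) (i, j)).
Qed.

Lemma mx_norm_mulmx_le (R : realDomainType) (m l n : nat) (M : 'M[R]_(m, l))
    (x : 'M[R]_(l, n)) :
  `|M *m x| <= (\sum_i \sum_j `|M i j|) * `|x|.
Proof.
have sumM_ge0 : 0 <= \sum_i \sum_j `|M i j| by do 2!apply: sumr_ge0 => ? _.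
rewrite -[`|M *m x|]/(mx_norm _) mx_normrE.
apply: bigmax_le => [|[i j] _ /=]; first by rewrite mulr_ge0.
rewrite mxE; apply: le_trans (ler_norm_sum _ _ _) _.
apply: (@le_trans _ _ (\sum_h `|M i h| * `|x|)).
  by apply: ler_sum => h _; rewrite normrM ler_wpM2l ?ler_coord_mx_norm.
rewrite -mulr_suml ler_wpM2r ?normr_ge0 // (bigD1 i) //= lerDl.
by do 2!apply: sumr_ge0 => ? _.
Qed.

Lemma colsubE_mulmx (R : pzRingType) (m n n' : nat) (g : 'I_n' -> 'I_n)
    (A : 'M[R]_(m, n)) :
  colsub g A = A *m colsub g 1%:M.
Proof. by rewrite mulmx_colsub mulmx1. Qed.

Lemma exists_notin_codom (m n : nat) (f : 'I_m -> 'I_n) :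
  (m < n)%N -> exists j, j \notin codom f.
Proof.
move=> m_lt_n; suff /subsetPn[j _ j_out] : ~~ ([set: 'I_n]%SET \subset codom f).
  by exists j.
apply: contraTN m_lt_n => /subset_leq_card; rewrite cardsT card_ord -leqNgt.
move/leq_trans; apply.
by rewrite (leq_trans (card_size _)) ?size_codom ?card_ord.
Qed.

Lemma infinite_set_natr (R : realType) (T : Type) (S : set T) (g : T -> R) :
  (forall k : nat, exists2 x, S x & g x = k%:R) -> infinite_set S.
Proof.
move=> g_natr S_fin; apply: infinite_nat.
apply: sub_finite_set (finite_image (fun x => Num.trunc (g x)) S_fin) => k _.
by have [x Sx gx] := g_natr k; exists x; rewrite // gx natrK.
Qed.

Lemma cvg_lipschitz {R : realFieldType} {V W : normedModType R} (T : V -> W)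
    (C : R) (u : nat -> V) (l : V) :
  (forall x y, `|T x - T y| <= C * `|x - y|) ->
  u n @[n --> \oo] --> l -> T (u n) @[n --> \oo] --> T l.
Proof.
move=> lipT /cvgrPdist_le ul; apply/cvgrPdist_le => e e0.
have C1_gt0 : 0 < `|C| + 1 by rewrite ltr_wpDl.
have C_le : C <= `|C| + 1 by rewrite (le_trans (ler_norm C)) ?lerDl.
near=> n; apply: le_trans (lipT _ _) _.
apply: le_trans (ler_wpM2r (normr_ge0 _) C_le) _.
rewrite mulrC -ler_pdivlMr //; near: n; apply: ul.
by rewrite divr_gt0.
Unshelve. all: end_near. Qed.

(* [N] need not be a norm: being comparable with the norm is enough for the
   Banach iteration, which spares us Minkowski's inequality for [vnorm]. *)
Section GaugeContraction.
Context {R : realType} {X : completeNormedModType R}.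
Variables (N : X -> R) (K q : R) (T : X -> X).
Hypotheses (norm_le_N : forall x, `|x| <= N x)
  (N_le_norm : forall x, N x <= K * `|x|).
Hypotheses (q_ge0 : 0 <= q) (q_lt1 : q < 1).
Hypothesis contractT : forall x y, N (T x - T y) <= q * N (x - y).

Lemma gauge_contraction_fixpoint : exists x, T x = x.
Proof.
pose u n := iter n T 0.
have N_ge0 x : 0 <= N x by apply: le_trans (norm_le_N x).
have step_le n : N (u n.+1 - u n) <= geometric (N (u 1%N - u 0%N)) q n.
  elim: n => [|n IH]; first by rewrite /= expr0 mulr1.
  rewrite /geometric /= exprS mulrCA; apply: le_trans (contractT _ _) _.
  exact: ler_wpM2l.
have cvg_u : cvgn u.
  have : cvgn (series (telescope u)).
    apply: normed_cvg; apply: (series_le_cvg _ _ _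
      (@is_cvg_geometric_series _ (N (u 1%N - u 0%N)) q _)).
    - by move=> n; rewrite /= normr_ge0.
    - by move=> n; apply: geometric_ge0.
    - move=> n /=; exact: le_trans (norm_le_N _) (step_le n).
    - by rewrite ger0_norm.
  rewrite telescopeK => cvg_u0.
  have -> : u = [sequence u n - u 0%N]_n + (fun=> u 0%N).
    by apply/funext => n /=; rewrite subrK.
  exact: is_cvgD cvg_u0 (is_cvg_cst _).
have uL : u n @[n --> \oo] --> limn u by [].
have lipT x y : `|T x - T y| <= q * K * `|x - y|.
  apply: le_trans (norm_le_N _) _; apply: le_trans (contractT _ _) _.
  by rewrite -mulrA ler_wpM2l.
have TuL : T (u n) @[n --> \oo] --> limn u by rewrite -cvg_shiftS in uL.
exists (limn u); exact: norm_cvg_unique (cvg_lipschitz lipT uL) TuL.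
Qed.

End GaugeContraction.

Section VectorNorm.
Variables (R : realType) (k : nat) (p : \bar R).
Hypothesis p_ge1 : (1%:E <= p)%E.

Let p_cases : (exists2 r : R, 1 <= r & p = r%:E) \/ p = +oo%E.
Proof.
by case: p p_ge1 => [r r1||] /=; [left; exists r | right | rewrite leeNy_eq].
Qed.

Lemma vnorm_ge0 (x : 'cV[R]_k) : 0 <= vnorm p x.
Proof.
by case: p_cases => [[r _ ->]|->]; rewrite /= ?powR_ge0 ?bigmax_ge_id.
Qed.

Lemma ler_coord_vnorm (x : 'cV[R]_k) i : `|x i 0| <= vnorm p x.
Proof.
case: p_cases => [[r r_ge1 ->]|->] /=; last first.
  exact: (le_bigmax _ (fun j => `|x j 0|)).
have r_gt0 : 0 < r by apply: lt_le_trans r_ge1.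
rewrite -[leLHS](powRK (lt0r_neq0 r_gt0) (normr_ge0 _)).
apply: ge0_ler_powR;
  rewrite ?invr_ge0 ?(ltW r_gt0) ?nnegrE ?powR_ge0 ?sumr_ge0 //.
by rewrite (bigD1 i) //= lerDl sumr_ge0.
Qed.

Lemma ler_vnorm (x y : 'cV[R]_k) :
  (forall i, `|x i 0| <= `|y i 0|) -> vnorm p x <= vnorm p y.
Proof.
move=> le_xy; case: p_cases => [[r r_ge1 ->]|->] /=; last first.
  apply: bigmax_le => [|i _]; first exact: bigmax_ge_id.
  exact: le_trans (le_xy i) (le_bigmax _ (fun j => `|y j 0|) i).
have r_ge0 : 0 <= r by apply: le_trans r_ge1.
apply: ge0_ler_powR; rewrite ?invr_ge0 ?nnegrE ?sumr_ge0 //.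
by apply: ler_sum => i _; apply: ge0_ler_powR.
Qed.

Lemma mx_norm_le_vnorm (x : 'cV[R]_k) : `|x| <= vnorm p x.
Proof.
rewrite -[`|x|]/(mx_norm x) mx_normrE.
apply: bigmax_le => [|[i j] _]; first exact: vnorm_ge0.
by rewrite (ord1 j); apply: ler_coord_vnorm.
Qed.

Lemma vnorm_gt0 (x : 'cV[R]_k) : x != 0 -> 0 < vnorm p x.
Proof.
by rewrite -normr_gt0 => /lt_le_trans; apply; apply: mx_norm_le_vnorm.
Qed.

Lemma vnorm_le_mx_norm :
  exists2 K, 0 <= K & forall x : 'cV[R]_k, vnorm p x <= K * `|x|.
Proof.
have le_const (x : 'cV[R]_k) : vnorm p x <= vnorm p (const_mx `|x| : 'cV_k).
  by apply: ler_vnorm => i; rewrite mxE normr_id ler_coord_mx_norm.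
case: p_cases => [[r r_ge1 p_r]|p_oo]; last first.
  exists 1 => // x; rewrite mul1r; apply: le_trans (le_const x) _; rewrite p_oo.
  by apply: bigmax_le => // i _; rewrite mxE normr_id.
have r_gt0 : 0 < r by apply: lt_le_trans r_ge1.
exists (k%:R `^ r^-1) => [|x]; first exact: powR_ge0.
apply: le_trans (le_const x) _; rewrite p_r /=.
under eq_bigr do rewrite mxE normr_id.
rewrite sumr_const card_ord -[_ *+ k]mulr_natl powRM ?powR_ge0 //.
by rewrite powRK ?lt0r_neq0.
Qed.

Lemma vnorm0 : vnorm p (0 : 'cV[R]_k) = 0.
Proof.
have [K _ le_K] := vnorm_le_mx_norm.
by apply/eqP; rewrite eq_le vnorm_ge0 andbT (le_trans (le_K 0)) ?normr0 ?mulr0.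
Qed.

Lemma opnorm_lt1_contraction (M : 'M[R]_k) : opnorm p M < 1 ->
  exists2 q, 0 <= q < 1 & forall x, vnorm p (M *m x) <= q * vnorm p x.
Proof.
move=> M_lt1; exists (Num.max 0 (opnorm p M)) => [|x].
  by rewrite le_max lexx gt_max ltr01 M_lt1.
have [->|x_neq0] := eqVneq x 0; first by rewrite mulmx0 vnorm0 mulr0.
have x_gt0 := vnorm_gt0 x_neq0.
have [K K_ge0 le_K] := vnorm_le_mx_norm.
set C := \sum_i \sum_j `|M i j|.
have M_bounded y : y != 0 -> vnorm p (M *m y) / vnorm p y <= K * C.
  move=> y_neq0; rewrite ler_pdivrMr ?vnorm_gt0 // -mulrA.
  apply: le_trans (le_K _) _; rewrite ler_wpM2l //.
  apply: le_trans (mx_norm_mulmx_le _ _) _.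
  by rewrite ler_wpM2l ?mx_norm_le_vnorm // -/C; do 2!apply: sumr_ge0 => ? _.
have : vnorm p (M *m x) / vnorm p x <= opnorm p M.
  apply: sup_upper_bound; last by exists x.
  split; first by exists (vnorm p (M *m x) / vnorm p x), x.
  by exists (K * C) => _ [y /= y_neq0 <-]; apply: M_bounded.
rewrite ler_pdivrMr // => /le_trans; apply.
by rewrite ler_wpM2r ?vnorm_ge0 // le_max lexx orbT.
Qed.

Lemma ave_solvable (M : 'M[R]_k) (c : 'cV[R]_k) :
  opnorm p M < 1 -> exists x, x - M *m mabs x = c.
Proof.
move=> /opnorm_lt1_contraction[q /andP[q_ge0 q_lt1] contrM].
have [K _ le_K] := vnorm_le_mx_norm.
have contrT x y :
    vnorm p ((c + M *m mabs x) - (c + M *m mabs y)) <= q * vnorm p (x - y).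
  rewrite opprD addrACA subrr add0r -mulmxBr.
  apply: le_trans (contrM _) _; rewrite ler_wpM2l //; apply: ler_vnorm => i.
  by rewrite !mxE ler_dist_dist.
have [x fix_x] :=
  gauge_contraction_fixpoint mx_norm_le_vnorm le_K q_ge0 q_lt1 contrT.
by exists x; rewrite -{1}fix_x addrK.
Qed.

End VectorNorm.

Lemma gave_solvable (R : realType) (k : nat) (p : \bar R) (A B : 'M[R]_k)
    (c : 'cV[R]_k) :
  (1%:E <= p)%E -> A \in unitmx -> opnorm p (invmx A *m B) < 1 ->
  exists x, A *m x - B *m mabs x = c.
Proof.
move=> p_ge1 A_unit /(ave_solvable p_ge1 (invmx A *m c))[x fix_x]; exists x.
by rewrite -[B](mulKVmx A_unit) -mulmxA -mulmxBr fix_x mulKVmx.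
Qed.

Section LiftVector.
Variables (R : realType) (m n : nat) (f : 'I_m -> 'I_n) (j0 : 'I_n).
Hypotheses (f_inj : injective f) (j0_out : j0 \notin codom f).

Definition lift_vec (y : 'cV[R]_m) (t : R) : 'cV[R]_n :=
  colsub f 1%:M *m y + t *: delta_mx j0 0.

Lemma mulmx_colsub1_f (y : 'cV[R]_m) i : (colsub f 1%:M *m y) (f i) 0 = y i 0.
Proof.
rewrite mxE (bigD1 i) //= !mxE eqxx mul1r big1 ?addr0 // => i' i'_neq_i.
by rewrite !mxE (inj_eq f_inj) eq_sym (negbTE i'_neq_i) mul0r.
Qed.

Lemma mulmx_colsub1_out (y : 'cV[R]_m) j :
  j \notin codom f -> (colsub f 1%:M *m y) j 0 = 0.
Proof.
move=> j_out; rewrite mxE big1 // => i _; rewrite !mxE.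
suff /negbTE-> : j != f i by rewrite mul0r.
by apply: contraNneq j_out => ->; apply: codom_f.
Qed.

Lemma lift_vec_j0 y t : lift_vec y t j0 0 = t.
Proof.
by rewrite [LHS]mxE mulmx_colsub1_out // add0r !mxE !eqxx mulr1.
Qed.

Lemma mabs_lift_vec y t : mabs (lift_vec y t) = lift_vec (mabs y) `|t|.
Proof.
apply/matrixP => j z; rewrite (ord1 z) [LHS]mxE /lift_vec [in LHS]mxE [RHS]mxE.
have [/codomP[i ->]|j_out] := boolP (j \in codom f).
  have /negbTE fi_neq_j0 : f i != j0.
    by apply: contraNneq j0_out => <-; apply: codom_f.
  by rewrite !mulmx_colsub1_f !mxE fi_neq_j0 !mulr0 !addr0.
by rewrite !mulmx_colsub1_out // !add0r !mxE eqxx andbT normrM normr_nat.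
Qed.

Lemma gave_lift_vec (k : nat) (A B : 'M[R]_(k, n)) (b : 'cV[R]_k) y t :
  colsub f A *m y - colsub f B *m mabs y =
    b - (t *: col j0 A - `|t| *: col j0 B) ->
  A *m lift_vec y t - B *m mabs (lift_vec y t) = b.
Proof.
move=> y_sol; rewrite mabs_lift_vec /lift_vec !mulmxDr !mulmxA -!colsubE_mulmx.
by rewrite -!scalemxAr -!colE opprD addrACA y_sol subrK.
Qed.

End LiftVector.

Theorem theorem3p2 (R : realType) (m n : nat) (A B : 'M[R]_(m, n))
  (f : 'I_m -> 'I_n) (p : \bar R) (b : 'cV[R]_m) :
  (m < n)%N ->
  \rank A = m ->
  injective f ->
  colsub f A \in unitmx ->
  (1%:E <= p)%E ->
  opnorm p (invmx (colsub f A) *m colsub f B) < 1 ->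
  infinite_set [set x : 'cV[R]_n | A *m x - B *m mabs x = b].
Proof.
(* The rank hypothesis follows from the invertibility of [colsub f A]. *)
move=> m_lt_n _ f_inj A1_unit p_ge1 opnorm_lt1.
have [j0 j0_out] := exists_notin_codom f m_lt_n.
apply: (infinite_set_natr (g := fun x : 'cV[R]_n => x j0 0)) => k.
pose c := b - (k%:R *: col j0 A - `|k%:R| *: col j0 B).
have [y y_sol] := gave_solvable c p_ge1 A1_unit opnorm_lt1.
exists (lift_vec f j0 y k%:R); last exact: lift_vec_j0.
exact: gave_lift_vec.
Qed.
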